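(* Let $A=\{a_1,\dots,a_k\}$ with $k\ge2$ and let $Z\subseteq A^+$ be a finite code of standard form with $\gcd(|Z_{a_1}|,\dots,|Z_{a_k}|)>1$. Fix $t\in\{1,\dots,k\}$ and $w\in Z_{a_t}$ with $|w|=\min\{|z|: z\in Z\}$. Let $P_w$ be the set of non-empty proper prefixes of $w$, and let $D$ be the set of integers $d\ge2$ dividing all of $|Z_{a_1}|,\dots,|Z_{a_k}|$. For $u\in P_w$ let $Q_u=\{U\subseteq u^{-1}Z_{a_t}: |U|\in D\}$, and for a non-empty finite set $Y$ let $R_Y=\{V\subseteq \bigcap_{y\in Y}Zy^{-1}: |V|=|Z|/|Y|\}$. Then $Z$ is an alt-induced code if and only if there exist $u\in P_w$, $Y\in Q_u$ and $X\in R_Y$ such that $Z=XY$.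
   Context: $A^+$ is the set of non-empty words over $A$; $|w|$ is the length of a word, $|S|$ the cardinality of a set; $XY=\{xy:x\in X,y\in Y\}$. For $a\in A$, $Z_a$ is the set of words of $Z$ beginning with $a$. For a word $u$: $u^{-1}S=\{v\in A^*: uv\in S\}$ and $Su^{-1}=\{v\in A^*: vu\in S\}$. A code is a subset of $A^+$ in which every word has at most one factorization into its elements. A finite code $Z$ over $A$ is of standard form if every word of $Z$ has length at least $2$, it is not the case that all words of $Z$ begin with the same letter, and it is not the case that all words of $Z$ end with the same letter. For non-empty $X,Y\subseteq A^+$, $(X,Y)$ is an alternative code if $XY$ is a code and each element of $XY$ has exactly one factorization $xy$ with $x\in X,y\in Y$ (equivalently, no word admits two different similar alternative factorizations on $(X,Y)$). $Z$ is an alt-induced code if $Z=XY$ for some alternative code $(X,Y)$. *)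

From mathcomp Require Import all_boot.
Set Implicit Arguments. Unset Strict Implicit. Unset Printing Implicit Defensive.

Section Words.
Variable A : finType.
Notation word := (seq A).

Definition lang := word -> Prop.

Definition is_code (S : lang) : Prop :=
  (forall z, S z -> z <> [::]) /\
  forall xs ys : seq word,
    (forall x, x \in xs -> S x) -> (forall y, y \in ys -> S y) ->
    flatten xs = flatten ys -> xs = ys.

Definition lprod (X Y : lang) : lang :=
  fun w => exists x y, X x /\ Y y /\ w = x ++ y.

Definition alternative_code (X Y : lang) : Prop :=
  (exists x, X x) /\ (exists y, Y y) /\
  (forall x, X x -> x <> [::]) /\ (forall y, Y y -> y <> [::]) /\
  is_code (lprod X Y) /\
  (forall x1 y1 x2 y2, X x1 -> Y y1 -> X x2 -> Y y2 ->
     x1 ++ y1 = x2 ++ y2 -> x1 = x2 /\ y1 = y2).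

Definition alt_induced (Z : lang) : Prop :=
  exists X Y : lang, alternative_code X Y /\ forall z, Z z <-> lprod X Y z.

Definition begins_with (a : A) (z : word) : bool :=
  if z is b :: _ then b == a else false.
Definition ends_with (a : A) (z : word) : bool :=
  if z is _ :: _ then last a z == a else false.
Definition Zstart (Z : seq word) (a : A) : seq word :=
  [seq z <- Z | begins_with a z].

Definition standard_form (Z : seq word) : Prop :=
  (forall z, z \in Z -> 2 <= size z) /\
  ~ (exists a, forall z, z \in Z -> begins_with a z) /\
  ~ (exists a, forall z, z \in Z -> ends_with a z).

Definition gcd_Zstart (Z : seq word) : nat :=
  \big[gcdn/0]_(a : A) size (Zstart Z a).

Definition in_D (Z : seq word) (d : nat) : Prop :=
  2 <= d /\ forall a : A, d %| size (Zstart Z a).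

Definition proper_prefix (u w : word) : Prop :=
  0 < size u < size w /\ u = take (size u) w.

(* U ∈ Q_u (with respect to the letter a = a_t); finite sets are uniq seqs *)
Definition in_Q (Z : seq word) (a : A) (u : word) (U : seq word) : Prop :=
  uniq U /\ (forall v, v \in U -> (u ++ v) \in Zstart Z a) /\ in_D Z (size U).

Definition in_R (Z : seq word) (Y V : seq word) : Prop :=
  uniq V /\ (forall v, v \in V -> forall y, y \in Y -> (v ++ y) \in Z) /\
  size V = size Z %/ size Y.

End Words.

From mathcomp Require Import all_boot.
From Stdlib Require Import Classical.
Set Implicit Arguments. Unset Strict Implicit. Unset Printing Implicit Defensive.

(* If Z = XY for an alternative code (X, Y), then |Z| = |X| |Y| and
   |Z_c| = |X_c| |Y| for every letter c, so |Y| divides every |Z_c|; |Y| >= 2,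
   since otherwise all words of Z would end with the last letter of the unique
   word of Y; and the X-part u of w is a proper prefix of w with uY within Z_a.
   Conversely, if Z = XY with |X| = |Z| / |Y| and |Y| dividing |Z|, the |X| |Y|
   products exhaust Z, so each word of Z factors uniquely.  Minimality of |w|
   keeps the empty word out of Y; if it lies in X, then Y is a subset of Z and
   |Y| dividing |Z_c| = |Y_c| + |X_c| |Y| forces all words of Y to begin with a
   common letter c, which is moved from the right factor to the left one. *)

Lemma map_uniq_inj (T1 T2 : eqType) (f : T1 -> T2) (s : seq T1) :
  uniq (map f s) -> {in s &, injective f}.
Proof.
elim: s => // x s IHs /= /andP[fx_notin Us] x1 x2.
rewrite !inE => /predU1P[-> | s_x1] /predU1P[-> | s_x2] // E.
- by move: fx_notin; rewrite E map_f.
- by move: fx_notin; rewrite -E map_f.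
- exact: IHs.
Qed.

Lemma allpairs_uniq_inj (S T : eqType) (R : eqType) (f : S -> T -> R)
    (s : seq S) (t : seq T) :
    uniq [seq f x y | x <- s, y <- t] ->
  forall x1 y1 x2 y2, x1 \in s -> y1 \in t -> x2 \in s -> y2 \in t ->
  f x1 y1 = f x2 y2 -> x1 = x2 /\ y1 = y2.
Proof.
rewrite -(map_allpairs (uncurry f) pair) => /map_uniq_inj inj_f x1 y1 x2 y2.
move=> sx1 ty1 sx2 ty2 E.
by have [] := inj_f (x1, y1) (x2, y2) (allpairs_f _ sx1 ty1) (allpairs_f _ sx2 ty2) E.
Qed.

Lemma exists_uniq_filter_prop (T : eqType) (P : T -> Prop) (s : seq T) :
  exists2 s', uniq s' & forall x, x \in s' <-> x \in s /\ P x.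
Proof.
have [s' Hs'] : exists s' : seq T, forall x, x \in s' <-> x \in s /\ P x.
  elim: s => [|y s [s' Hs']]; first by exists [::] => x; split => // [[]].
  have [Py | nPy] := classic (P y); [exists (y :: s') | exists s'] => x;
    rewrite !inE; split.
  - by case/predU1P => [-> | /Hs'[-> Px]]; rewrite ?eqxx ?orbT.
  - by case=> /predU1P[-> | sx] Px; rewrite ?eqxx //; apply/orP; right; apply/Hs'.
  - by case/Hs' => sx Px; rewrite sx orbT.
  - by case=> /predU1P[-> | sx] Px; [case: nPy | apply/Hs'].
exists (undup s') => [|x]; first exact: undup_uniq.
by rewrite mem_undup.
Qed.

Section Words.
Variable A : finType.
Notation word := (seq A).
Implicit Types (c : A) (u w x y z : word) (X Y : lang A) (Z Xs Ys : seq word).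

Lemma begins_with_cat c x y : x <> [::] -> begins_with c (x ++ y) = begins_with c x.
Proof. by case: x. Qed.

Lemma ends_with_cat c x y : y <> [::] -> ends_with c (x ++ y) = ends_with c y.
Proof. by case: y => // b y _; case: x => //= b' x; rewrite last_cat. Qed.

Lemma count_begins_with_allpairs c Xs Ys :
  count (begins_with c) [seq x ++ y | x <- Xs, y <- Ys] =
  count_mem [::] Xs * count (begins_with c) Ys + count (begins_with c) Xs * size Ys.
Proof.
elim: Xs => [|x Xs IHXs] //; rewrite allpairs_cons count_cat IHXs count_map.
case: x => [|b x] /=.
  by rewrite (@eq_count _ _ (begins_with c)) // addnA add1n mulSn.
have -> : count (preim (cat (b :: x)) (begins_with c)) Ys = (b == c) * size Ys.
  case: (b =P c) => [-> | nbc].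
    by rewrite mul1n -count_predT; apply: eq_count => y /=; rewrite eqxx.
  by rewrite mul0n -(count_pred0 Ys); apply: eq_count => y /=; apply/eqP.
by rewrite add0n mulnDl addnCA.
Qed.

Lemma size_sum_Zstart Z : (forall z, z \in Z -> z <> [::]) ->
  size Z = \sum_(c : A) size (Zstart Z c).
Proof.
move=> Zne; rewrite -sum1_size.
under [RHS]eq_bigr => c _ do rewrite size_filter -sum1_count.
rewrite (exchange_big_dep xpredT) //=; apply: eq_big_seq => z /Zne.
by case: z => [|b z] // _; rewrite (bigD1 b) //= big_pred0 // => c; rewrite eq_sym andbN.
Qed.

Lemma is_code_ext (S T : lang A) : (forall z, S z <-> T z) -> is_code S -> is_code T.
Proof.
move=> ST [S_ne S_fact]; split=> [z /ST | xs ys xsT ysT]; first exact: S_ne.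
by apply: S_fact => [x /xsT | y /ysT] /ST.
Qed.

Lemma alt_inducedI (Zl X Y : lang A) : is_code Zl -> (forall z, Zl z <-> lprod X Y z) ->
    (exists x, X x) -> (exists y, Y y) ->
    (forall x, X x -> x <> [::]) -> (forall y, Y y -> y <> [::]) ->
    (forall x1 y1 x2 y2, X x1 -> Y y1 -> X x2 -> Y y2 ->
       x1 ++ y1 = x2 ++ y2 -> x1 = x2 /\ y1 = y2) ->
  alt_induced Zl.
Proof.
move=> Zl_code Zl_XY *; exists X, Y; split=> //; do 5 split=> //.
exact: is_code_ext Zl_XY Zl_code.
Qed.

Lemma lprod_left_finite X Y Z : (exists y, Y y) -> (forall z, lprod X Y z -> z \in Z) ->
  exists2 Xs, uniq Xs & forall x, x \in Xs <-> X x.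
Proof.
move=> [y Yy] XY_Z.
have [Xs uXs memXs] :=
  exists_uniq_filter_prop X [seq take i z | z <- Z, i <- iota 0 (size z).+1].
exists Xs => // x; rewrite memXs; split=> [[] // | Xx]; split=> //.
apply/allpairsPdep; exists (x ++ y), (size x); split; first by apply: XY_Z; exists x, y.
  by rewrite mem_iota size_cat ltnS leq_addr.
by rewrite take_size_cat.
Qed.

Lemma lprod_right_finite X Y Z : (exists x, X x) -> (forall z, lprod X Y z -> z \in Z) ->
  exists2 Ys, uniq Ys & forall y, y \in Ys <-> Y y.
Proof.
move=> [x Xx] XY_Z.
have [Ys uYs memYs] :=
  exists_uniq_filter_prop Y [seq drop i z | z <- Z, i <- iota 0 (size z).+1].
exists Ys => // y; rewrite memYs; split=> [[] // | Yy]; split=> //.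
apply/allpairsPdep; exists (x ++ y), (size x); split; first by apply: XY_Z; exists x, y.
  by rewrite mem_iota size_cat ltnS leq_addr.
by rewrite drop_size_cat.
Qed.

Lemma lprod_mem_allpairs Z Xs Ys :
    (forall z, z \in Z <-> lprod (fun x => x \in Xs) (fun y => y \in Ys) z) ->
  Z =i [seq x ++ y | x <- Xs, y <- Ys].
Proof.
move=> Z_fact z; apply/idP/allpairsP => [/Z_fact[x [y [? [? ->]]]] | [[x y] [/= ? ? ->]]].
  by exists (x, y).
by apply/Z_fact; exists x, y.
Qed.

Lemma lprod_shift_letter X Y c z : (forall y, Y y -> begins_with c y) ->
  lprod X Y z <-> lprod (fun x => exists2 x0, X x0 & x = rcons x0 c) (fun y => Y (c :: y)) z.
Proof.
move=> Yc; split=> [[x [y [Xx [Yy ->]]]] | [_ [y [[x Xx ->] [Yy ->]]]]].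
  case: y Yy (Yc y Yy) => [|b y] // Yy /eqP Eb; subst b.
  by exists (rcons x c), y; rewrite cat_rcons; split=> //; exists x.
by exists x, (c :: y); rewrite cat_rcons.
Qed.

Lemma all_begins_with_right_factor Z Xs Ys c y0 :
    uniq Xs -> [::] \in Xs -> perm_eq Z [seq x ++ y | x <- Xs, y <- Ys] ->
    size Ys %| size (Zstart Z c) -> y0 \in Ys -> begins_with c y0 ->
  all (begins_with c) Ys.
Proof.
move=> uXs Xs_nil /permP pZ + Ys_y0 y0c.
rewrite size_filter pZ count_begins_with_allpairs count_uniq_mem // Xs_nil mul1n.
rewrite dvdn_addl ?dvdn_mull // => dvd.
by rewrite all_count eqn_leq count_size dvdn_leq // -has_count; apply/hasP; exists y0.
Qed.

Lemma size_right_factor_gt1 Z X Ys : standard_form Z ->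
    (forall z, z \in Z -> lprod X (fun y => y \in Ys) z) ->
    (forall y, y \in Ys -> y <> [::]) -> (exists y, y \in Ys) ->
  1 < size Ys.
Proof.
move=> [_ [_ not_ends]] Z_fact Ys_ne [y0 Ys_y0]; rewrite ltnNge; apply/negP => Ys_le1.
have Ys1 : Ys = [:: y0].
  by case: (Ys) Ys_y0 Ys_le1 => [|y [|]] // ; rewrite inE => /eqP ->.
case E: y0 (Ys_ne _ Ys_y0) => [|b y] // _.
apply: not_ends; exists (last b y) => z /Z_fact [x [y' [_ [+ ->]]]].
by rewrite Ys1 inE => /eqP ->; rewrite ends_with_cat E //= eqxx.
Qed.

Lemma alt_induced_of_factorization Z a w u Ys Xs :
    uniq Z -> is_code (fun z => z \in Z) -> standard_form Z -> w \in Zstart Z a ->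
    (forall z, z \in Z -> size w <= size z) ->
    proper_prefix u w -> in_Q Z a u Ys -> in_R Z Ys Xs ->
    (forall z, z \in Z <-> lprod (fun x => x \in Xs) (fun y => y \in Ys) z) ->
  alt_induced (fun z => z \in Z).
Proof.
move=> uZ Zcode [Z_ge2 _] wZa w_min [/andP[_ u_lt_w] _] [uYs [Ys_Za [Ys_ge2 Ys_dvd]]]
  [uXs [_ Xs_size]] Z_fact.
have Ys_ne y : y \in Ys -> y <> [::].
  by move=> /Ys_Za; rewrite mem_filter => /andP[_ /w_min] + y_nil;
    rewrite y_nil cats0 leqNgt u_lt_w.
have size_Z : size Z = size Xs * size Ys.
  rewrite Xs_size divnK // (size_sum_Zstart (Z := Z)); first by apply: dvdn_sum => c _.
  by move=> z /Z_ge2; case: z.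
pose P := [seq x ++ y | x <- Xs, y <- Ys].
have Z_P : Z =i P := lprod_mem_allpairs Z_fact.
have uP : uniq P by rewrite (uniq_size_uniq uZ Z_P) size_allpairs size_Z.
have pZ : perm_eq Z P := uniq_perm uZ uP Z_P.
have XsYs_inj := allpairs_uniq_inj uP.
have [y0 Ys_y0] : exists y0, y0 \in Ys.
  by case: (Ys) Ys_ge2 => // y0 s _; exists y0; rewrite mem_head.
have [x0 [_ [Xs_x0 _]]] : exists x0 y, x0 \in Xs /\ y \in Ys /\ w = x0 ++ y.
  by apply/Z_fact; move: wZa; rewrite mem_filter => /andP[].
have [Xs_nil | Xs_nnil] := boolP ([::] \in Xs); last first.
  apply: (alt_inducedI Zcode Z_fact) => //; [by exists x0 | by exists y0 |].
  by move=> x Xs_x x_nil; rewrite -x_nil Xs_x in Xs_nnil.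
case E0: y0 => [|c y0']; first by case: (Ys_ne _ Ys_y0).
have y0c : begins_with c y0 by rewrite E0 /= eqxx.
have /allP Ys_c := all_begins_with_right_factor uXs Xs_nil pZ (Ys_dvd c) Ys_y0 y0c.
apply: (alt_inducedI Zcode (fun z => iff_trans (Z_fact z) (lprod_shift_letter _ _ Ys_c))).
- by exists [:: c]; exists [::].
- by exists y0'; rewrite -E0.
- by move=> _ [[|b x] _ ->].
- by move=> y /(allpairs_f cat Xs_nil); rewrite -Z_P => /Z_ge2 + y_nil; rewrite y_nil.
move=> _ y1 _ y2 [x1 Xs_x1 ->] Ys_y1 [x2 Xs_x2 ->] Ys_y2; rewrite !cat_rcons => E.
by have [-> [->]] := XsYs_inj _ _ _ _ Xs_x1 Ys_y1 Xs_x2 Ys_y2 E.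
Qed.

Lemma factorization_of_alt_induced Z a w :
    uniq Z -> standard_form Z -> w \in Zstart Z a -> alt_induced (fun z => z \in Z) ->
  exists u Ys Xs, proper_prefix u w /\ in_Q Z a u Ys /\ in_R Z Ys Xs /\
    forall z, z \in Z <-> lprod (fun x => x \in Xs) (fun y => y \in Ys) z.
Proof.
move=> uZ Zstd wZa [X [Y [[[x0 Xx0] [[y0 Yy0] [X_ne [Y_ne [_ XY_inj]]]]] Z_XY]]].
have XY_Z z : lprod X Y z -> z \in Z by move/Z_XY.
have [Xs uXs memXs] := lprod_left_finite (ex_intro _ y0 Yy0) XY_Z.
have [Ys uYs memYs] := lprod_right_finite (ex_intro _ x0 Xx0) XY_Z.
have Z_fact z : z \in Z <-> lprod (fun x => x \in Xs) (fun y => y \in Ys) z.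
  rewrite Z_XY; split=> [[x [y [/memXs ? [/memYs ? ->]]]] | [x [y [/memXs ? [/memYs ? ->]]]]];
    by exists x, y.
have pZ : perm_eq Z [seq x ++ y | x <- Xs, y <- Ys].
  apply: uniq_perm uZ _ (lprod_mem_allpairs Z_fact).
  apply: allpairs_uniq => // -[x1 y1] [x2 y2].
  move=> /allpairsP[[? ?] [/= /memXs Xx1 /memYs Yy1 [-> ->]]].
  move=> /allpairsP[[? ?] [/= /memXs Xx2 /memYs Yy2 [-> ->]]] /= E.
  by have [-> ->] := XY_inj _ _ _ _ Xx1 Yy1 Xx2 Yy2 E.
have Xs_ne x : x \in Xs -> x <> [::] by move/memXs/X_ne.
have Ys_ne y : y \in Ys -> y <> [::] by move/memYs/Y_ne.
have [wZ wa] : w \in Z /\ begins_with a w by move: wZa; rewrite mem_filter => /andP[].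
have [u [y1 [Xs_u [Ys_y1 w_eq]]]] := proj1 (Z_fact w) wZ.
have u_ne := Xs_ne u Xs_u.
have ua : begins_with a u by rewrite -(begins_with_cat _ y1 u_ne) -w_eq.
exists u, Ys, Xs; split; [|split; [|split]] => //.
- split; last by rewrite w_eq take_size_cat.
  rewrite w_eq size_cat -{2}[size u]addn0 ltn_add2l !lt0n !size_eq0.
  by apply/andP; split; apply/eqP; [exact: u_ne | exact: Ys_ne].
- split=> //; split.
    move=> v Ys_v; rewrite mem_filter begins_with_cat // ua.
    by apply/Z_fact; exists u, v.
  split; first by apply: size_right_factor_gt1 Zstd (fun z => proj1 (Z_fact z)) Ys_ne _;
    exists y1.
  move=> c; rewrite size_filter (permP pZ) count_begins_with_allpairs.
  have Xs_nnil : [::] \notin Xs by apply/negP => /Xs_ne.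
  by rewrite (count_memPn Xs_nnil) mul0n add0n dvdn_mull.
split=> //; split; first by move=> v Xs_v y Ys_y; apply/Z_fact; exists v, y.
by rewrite (perm_size pZ) size_allpairs mulnK // lt0n size_eq0; case: (Ys) Ys_y1.
Qed.

End Words.

Theorem propositionP (A : finType) (hA : 2 <= #|A|) (Z : seq (seq A))
  (hZuniq : uniq Z) (hcode : is_code (fun z => z \in Z))
  (hstd : standard_form Z) (hgcd : 1 < gcd_Zstart Z)
  (a : A) (w : seq A) (hw : w \in Zstart Z a)
  (hwmin : forall z, z \in Z -> size w <= size z) :
  alt_induced (fun z => z \in Z) <->
  exists u (Y X : seq (seq A)),
    proper_prefix u w /\ in_Q Z a u Y /\ in_R Z Y X /\
    forall z, z \in Z <-> lprod (fun x => x \in X) (fun y => y \in Y) z.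
Proof.
split; first exact: factorization_of_alt_induced.
move=> [u [Y [X [u_w [Y_Q [X_R Z_XY]]]]]].
exact: alt_induced_of_factorization hw hwmin u_w Y_Q X_R Z_XY.
Qed.
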